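(* Let $\tau\ge1$ and consider two candidates $P,Q$, where only the preferred candidate of each voter with preference strength at least $\tau$ is known. Weighted Majority Rule 3 (defined in the context) has distortion at most $\max\{\frac{\tau+2}{\tau},\tau\}$, and no deterministic mechanism using only this information can achieve a smaller worst-case distortion.
   Context: Voters $N=\{1,\dots,n\}$ and candidates are points of an arbitrary metric space $(X,d)$. Voter $i$ prefers $P$ to $Q$ only if $d(i,P)\le d(i,Q)$; $SC(Y)=\sum_{i\in N}d(i,Y)$; distortion of a winner is its social cost divided by the minimum social cost over the candidates, and a mechanism's distortion is the supremum over instances. Let $A=\{i: d(i,Q)/d(i,P)\ge\tau\}$, $B=\{j: d(j,P)/d(j,Q)\ge\tau\}$, and $C$ the remaining voters; the available information consists only of the sets $A$ and $B$ (nothing is known about voters in $C$). Weighted Majority Rule 3: voters in $A\cup B$ get weight $1$, voters in $C$ weight $0$; select $P$ if $|A|\ge|B|$ and $Q$ otherwise. *)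

From Stdlib Require Import Reals Lra List.
Open Scope R_scope.

Definition is_metric {X : Type} (d : X -> X -> R) : Prop :=
  (forall x y, 0 <= d x y) /\
  (forall x y, d x y = 0 <-> x = y) /\
  (forall x y, d x y = d y x) /\
  (forall x y z, d x z <= d x y + d y z).

(* Voters N = {1,...,n} are given by the list v of their positions (n = length v). *)
Definition SC {X : Type} (d : X -> X -> R) (v : list X) (Y : X) : R :=
  fold_right (fun i acc => d i Y + acc) 0 v.

(* i in A  iff  d(i,Q)/d(i,P) >= tau, written multiplicatively: tau*d(i,P) <= d(i,Q). *)
Definition strong_for {X : Type} (d : X -> X -> R) (tau : R) (P Q : X) (i : X) : bool :=
  if Rle_dec (tau * d i P) (d i Q) then true else false.

Definition setA {X : Type} (d : X -> X -> R) (tau : R) (P Q : X) (v : list X) : list bool :=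
  map (strong_for d tau P Q) v.
Definition setB {X : Type} (d : X -> X -> R) (tau : R) (P Q : X) (v : list X) : list bool :=
  map (strong_for d tau Q P) v.

(* A deterministic mechanism sees only the sets A and B (as characteristic
   vectors over the voters) and outputs true = select P, false = select Q. *)
Definition mechanism : Type := list bool -> list bool -> bool.

Definition card (l : list bool) : nat := length (filter (fun b => b) l).

(* Weighted Majority Rule 3: weight 1 on A \cup B, 0 on C; P iff |A| >= |B|. *)
Definition WMR3 : mechanism := fun a b => Nat.leb (card b) (card a).

Definition outcome {X : Type} (m : mechanism) (d : X -> X -> R) (tau : R)
  (P Q : X) (v : list X) : X :=
  if m (setA d tau P Q v) (setB d tau P Q v) then P else Q.

Definition opt_cost {X : Type} (d : X -> X -> R) (P Q : X) (v : list X) : R :=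
  Rmin (SC d v P) (SC d v Q).

(* For every voter i and every D >= max{(tau+2)/tau, tau},
     d(i,P) - D d(i,Q) <= d(P,Q) ([i in B] - [i in A])            (voter_bound)
   by the triangle inequality: the key case i in A uses d(i,P) <= d(i,Q)/tau.
   Summing over voters gives SC(P) - D SC(Q) <= d(P,Q) (|B| - |A|), so when
   |A| >= |B| the chosen P costs at most D SC(Q), and symmetrically for Q.

   A mechanism that sees only A and B cannot distinguish two
   instances with equal A and B (fool_by_indistinguishable).  On the real line
   we exhibit such pairs: one voter in C placed at ratio r < tau from the two
   candidates, forcing distortion r (one_voter_instance), and one voter of A
   next to one voter of B at a candidate, forcing distortion close to
   (tau+2)/tau (two_voter_instance). *)

From Stdlib Require Import Reals List Lra Psatz.
Open Scope R_scope.
Import ListNotations.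

Lemma card_cons (b : bool) (l : list bool) :
  INR (card (b :: l)) = (if b then 1 else 0) + INR (card l).
Proof. unfold card; destruct b; simpl filter; simpl length; [rewrite S_INR|]; lra. Qed.

Lemma SC_nonneg {X : Type} (d : X -> X -> R) (v : list X) (Y : X) :
  is_metric d -> 0 <= SC d v Y.
Proof.
  intros [Hnn _]; unfold SC; induction v as [|i v IH]; cbn [fold_right].
  - lra.
  - pose proof (Hnn i Y); lra.
Qed.

Lemma voter_bound {X : Type} (d : X -> X -> R) (tau D : R) (P Q i : X) :
  is_metric d -> 1 <= tau -> tau <= D -> tau + 2 <= D * tau ->
  d i P - D * d i Q <=
  d P Q * ((if strong_for d tau Q P i then 1 else 0) -
           (if strong_for d tau P Q i then 1 else 0)).
Proof.
  intros [Hnn [_ [Hsym Htri]]] Ht HD1 HD2.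
  pose proof (Hnn i P); pose proof (Hnn i Q); pose proof (Hnn P Q).
  assert (TPQ : d P Q <= d i P + d i Q) by (rewrite (Hsym i P); apply Htri).
  assert (TiP : d i P <= d i Q + d P Q) by (rewrite (Hsym P Q); apply Htri).
  unfold strong_for.
  destruct (Rle_dec (tau * d i Q) (d i P)) as [inB | notB];
    destruct (Rle_dec (tau * d i P) (d i Q)) as [inA | notA].
  - (* in A and B: d(i,P) <= d(i,Q) *)
    nra.
  - (* in B only: d(i,P) <= d(i,Q) + d(P,Q) and D >= 1 *)
    nra.
  - (* in A only: d(i,P) + d(P,Q) <= 2 d(i,P) + d(i,Q) <= (tau+2)/tau d(i,Q) *)
    assert (Hsmall : tau * (2 * d i P + d i Q) <= (tau + 2) * d i Q) by nra.
    nra.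
  - (* in C: d(i,P) < tau d(i,Q) *)
    nra.
Qed.

Lemma sum_bound {X : Type} (d : X -> X -> R) (tau D : R) (P Q : X) (v : list X) :
  is_metric d -> 1 <= tau -> tau <= D -> tau + 2 <= D * tau ->
  SC d v P - D * SC d v Q <=
  d P Q * (INR (card (setB d tau P Q v)) - INR (card (setA d tau P Q v))).
Proof.
  intros Hm Ht HD1 HD2; unfold SC, setA, setB in *.
  induction v as [|i v IH]; cbn [fold_right map].
  - unfold card; simpl; lra.
  - pose proof (voter_bound d tau D P Q i Hm Ht HD1 HD2).
    rewrite !card_cons; lra.
Qed.

Lemma WMR3_distortion {X : Type} (d : X -> X -> R) (tau D : R) (P Q : X)
  (v : list X) :
  is_metric d -> 1 <= tau -> tau <= D -> tau + 2 <= D * tau ->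
  SC d v (outcome WMR3 d tau P Q v) <= D * opt_cost d P Q v.
Proof.
  intros Hm Ht HD1 HD2.
  pose proof (sum_bound d tau D P Q v Hm Ht HD1 HD2) as SP.
  pose proof (sum_bound d tau D Q P v Hm Ht HD1 HD2) as SQ.
  change (setB d tau Q P v) with (setA d tau P Q v) in SQ.
  change (setA d tau Q P v) with (setB d tau P Q v) in SQ.
  pose proof (SC_nonneg d v P Hm); pose proof (SC_nonneg d v Q Hm).
  destruct Hm as [Hnn [_ [Hsym _]]]; pose proof (Hnn P Q); rewrite (Hsym Q P) in SQ.
  enough (HW : SC d v (outcome WMR3 d tau P Q v) <= D * SC d v P /\
               SC d v (outcome WMR3 d tau P Q v) <= D * SC d v Q)
    by (unfold opt_cost; destruct (Rle_lt_dec (SC d v P) (SC d v Q));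
        [rewrite Rmin_left | rewrite Rmin_right]; lra).
  unfold outcome, WMR3.
  destruct (Nat.leb (card (setB d tau P Q v)) (card (setA d tau P Q v))) eqn:E.
  - apply Nat.leb_le, le_INR in E; split; nra.
  - apply Nat.leb_gt, lt_INR in E; split; nra.
Qed.

Definition defeats (tau rho : R) (m : mechanism) : Prop :=
  exists (X : Type) (d : X -> X -> R) (P Q : X) (v : list X),
    is_metric d /\ 0 < opt_cost d P Q v /\
    rho * opt_cost d P Q v < SC d v (outcome m d tau P Q v).

Lemma fool_by_indistinguishable (m : mechanism) (tau rho : R) {X : Type}
  (d : X -> X -> R) (P Q : X) (v1 v2 : list X) :
  is_metric d ->
  setA d tau P Q v1 = setA d tau P Q v2 ->
  setB d tau P Q v1 = setB d tau P Q v2 ->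
  0 < SC d v1 Q <= SC d v1 P -> rho * SC d v1 Q < SC d v1 P ->
  0 < SC d v2 P <= SC d v2 Q -> rho * SC d v2 P < SC d v2 Q ->
  defeats tau rho m.
Proof.
  intros Hm HA HB [H1 H1'] H1r [H2 H2'] H2r.
  destruct (m (setA d tau P Q v1) (setB d tau P Q v1)) eqn:Hpick.
  - exists X, d, P, Q, v1; unfold outcome, opt_cost.
    rewrite Hpick, Rmin_right by lra; auto.
  - exists X, d, P, Q, v2; unfold outcome, opt_cost.
    rewrite <- HA, <- HB, Hpick, Rmin_left by lra; auto.
Qed.

Definition dR (x y : R) : R := Rabs (x - y).

Lemma dR_metric : is_metric dR.
Proof.
  unfold dR; repeat split.
  - intros; apply Rabs_pos.
  - intros H; destruct (Req_dec (x - y) 0) as [E | E]; [lra|].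
    exfalso; exact (Rabs_no_R0 _ E H).
  - intros ->; replace (y - y) with 0 by ring; apply Rabs_R0.
  - intros; apply Rabs_minus_sym.
  - intros; replace (x - z) with ((x - y) + (y - z)) by ring; apply Rabs_triang.
Qed.

Lemma dR_right (x y : R) : x <= y -> dR x y = y - x.
Proof. intros H; unfold dR; rewrite Rabs_left1 by lra; ring. Qed.

Lemma dR_left (x y : R) : y <= x -> dR x y = x - y.
Proof. intros H; unfold dR; rewrite Rabs_pos_eq by lra; ring. Qed.

(* On an explicit instance, once all distances are computed, each
   membership test of A and B is decided by arithmetic. *)
Ltac decide_memberships :=
  repeat destruct (Rle_dec _ _); first [reflexivity | exfalso; nra].

(* One voter of C, at distances r and 1 (resp. 1 and r) from P and Q. *)
Lemma one_voter_instance (m : mechanism) (tau rho r : R) :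
  1 < r -> r < tau -> rho < r -> defeats tau rho m.
Proof.
  intros Hr1 Hrt Hrho.
  apply (fool_by_indistinguishable m tau rho dR 0 (1 + r) [r] [1]);
    [apply dR_metric | | | | | |];
    unfold setA, setB, SC, strong_for; cbn [map fold_right];
    rewrite ?(dR_left r 0), ?(dR_right r (1 + r)), ?(dR_left 1 0),
      ?(dR_right 1 (1 + r)) by lra;
    solve [decide_memberships | lra].
Qed.

(* Candidates P = 0, Q = 1; a voter of A at p and a voter of B at Q, versus
   a voter of A at P and a voter of B at 1 - p.  The bad candidate costs
   1 + p against 1 - p for the good one. *)
Lemma two_voter_instance (m : mechanism) (tau rho p : R) :
  1 <= tau -> 0 <= p -> p * (tau + 1) < 1 -> rho * (1 - p) < 1 + p ->
  defeats tau rho m.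
Proof.
  intros Ht Hp0 Hp1 Hrho.
  assert (Hp2 : p < 1 - p) by nra.
  apply (fool_by_indistinguishable m tau rho dR 0 1 [p; 1] [0; 1 - p]);
    [apply dR_metric | | | | | |];
    unfold setA, setB, SC, strong_for; cbn [map fold_right];
    rewrite ?(dR_left p 0), ?(dR_right p 1), ?(dR_left 1 0), ?(dR_right 1 1),
      ?(dR_right 0 0), ?(dR_right 0 1), ?(dR_left (1 - p) 0),
      ?(dR_right (1 - p) 1) by lra;
    solve [decide_memberships | lra].
Qed.

(* The ratio (1+p)/(1-p) of two_voter_instance tends to (tau+2)/tau as p
   increases to 1/(tau+1), so every rho below (tau+2)/tau is beaten by some
   admissible p. *)
Lemma two_voter_parameter (tau rho : R) :
  1 <= tau -> rho * tau < tau + 2 ->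
  exists p, 0 <= p /\ p * (tau + 1) < 1 /\ rho * (1 - p) < 1 + p.
Proof.
  intros Ht Hrho.
  destruct (Rlt_le_dec rho 1) as [Hlt | Hge].
  - exists 0; lra.
  - (* q = (rho-1)/(rho+1) solves rho (1-q) = 1+q and lies below 1/(tau+1) *)
    set (p0 := / (tau + 1)).
    set (q := (rho - 1) / (rho + 1)).
    assert (Hp0 : p0 * (tau + 1) = 1) by (unfold p0; field; lra).
    assert (Hq : q * (rho + 1) = rho - 1) by (unfold q; field; lra).
    assert (Hq0 : 0 <= q) by (unfold q; apply Rmult_le_pos; [lra | left; apply Rinv_0_lt_compat; lra]).
    assert (Hqp0 : q * (tau + 1) < 1).
    { assert (q * (tau + 1) * (rho + 1) < 1 * (rho + 1)) by nra. nra. }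
    exists ((p0 + q) / 2); repeat split; nra.
Qed.

Theorem mainTheorem7 (tau : R) (htau : 1 <= tau) :
  (* upper bound: distortion of WMR3 is at most max{(tau+2)/tau, tau} *)
  (forall (X : Type) (d : X -> X -> R), is_metric d ->
     forall (P Q : X) (v : list X),
       SC d v (outcome WMR3 d tau P Q v)
         <= Rmax ((tau + 2) / tau) tau * opt_cost d P Q v) /\
  (* lower bound: every deterministic mechanism using only A and B has
     worst-case distortion at least max{(tau+2)/tau, tau} *)
  (forall (m : mechanism) (rho : R), rho < Rmax ((tau + 2) / tau) tau ->
     exists (X : Type) (d : X -> X -> R) (P Q : X) (v : list X),
       is_metric d /\ 0 < opt_cost d P Q v /\
       rho * opt_cost d P Q v < SC d v (outcome m d tau P Q v)).
Proof.
  assert (Hdiv : (tau + 2) / tau * tau = tau + 2) by (field; lra).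
  split.
  - intros X d Hm P Q v.
    apply WMR3_distortion; [exact Hm | exact htau | apply Rmax_r |].
    pose proof (Rmax_l ((tau + 2) / tau) tau); nra.
  - intros m rho Hrho; fold (defeats tau rho m).
    destruct (Rlt_le_dec rho ((tau + 2) / tau)) as [Hsmall | Hlarge].
    + destruct (two_voter_parameter tau rho htau) as [p [Hp0 [Hp1 Hp2]]];
        [nra |].
      exact (two_voter_instance m tau rho p htau Hp0 Hp1 Hp2).
    + (* here rho < tau and 1 < rho, so r = (rho + tau)/2 works *)
      assert (Hrt : rho < tau).
      { unfold Rmax in Hrho; destruct (Rle_dec _ _); lra. }
      assert (Hr1 : 1 < rho) by nra.
      apply (one_voter_instance m tau rho ((rho + tau) / 2)); lra.
Qed.
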